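(* Let $X$ be a random variable with survival function $\overline{F}(x) = \mathbb{P}(X>x)$ given by $\overline{F}(x) = 1$ for $x < 2$ and $\overline{F}(x) = 2^{-\lfloor \log_2 x \rfloor}$ for $x \geq 2$ (i.e. $\mathbb{P}(X = 2^m) = 2^{-m}$ for $m \in \mathbb{N} = \{1,2,\dots\}$, the St. Petersburg lottery). For $n \geq 2$ let $X_1, \dots, X_n$ be i.i.d. copies of $X$ and $\overline{X}_n = \frac{1}{n}\sum_{i=1}^n X_i$. Then $X \leq_{\mathrm{st}} \overline{X}_n$ for all $n \in \{2^k : k \in \mathbb{N}\}$.
   Context: For random variables $X, Y$, $X \leq_{\mathrm{st}} Y$ means $\mathbb{P}(X > x) \leq \mathbb{P}(Y > x)$ for all $x \in \mathbb{R}$. *)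

From HB Require Import structures.
From mathcomp Require Import all_boot all_order all_algebra.
From mathcomp Require Import all_classical all_reals all_analysis.
Set Implicit Arguments. Unset Strict Implicit. Unset Printing Implicit Defensive.
Import Order.TTheory GRing.Theory Num.Theory.
Local Open Scope classical_set_scope.
Local Open Scope ring_scope.

Definition stpete_surv {R : realType} (x : R) : R :=
  if x < 2 then 1 else (2 : R) ^ (- Num.floor (ln x / ln 2)).

(* Mutual independence of a finite family of real random variables:
   P(/\_i X_i \in B_i) = prod_i P(X_i \in B_i) for all Borel sets B_i
   (taking B_i = setT recovers the product rule for every subfamily). *)
Definition mutually_independent {R : realType} {d : measure_display}
  {T : measurableType d} (P : probability T R) (n : nat)
  (Xs : 'I_n -> T -> R) : Prop :=
  forall B : 'I_n -> set R, (forall i, measurable (B i)) ->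
    P (\bigcap_(i in [set: 'I_n]) (Xs i @^-1` B i)) =
    (\prod_(i < n) P (Xs i @^-1` B i))%E.

Definition surv {R : realType} {d : measure_display} {T : measurableType d}
  (P : probability T R) (Y : T -> R) (x : R) : \bar R :=
  P [set t | x < Y t].

From HB Require Import structures.
From mathcomp Require Import all_boot all_order all_algebra.
From mathcomp Require Import all_classical all_reals all_analysis.
From mathcomp Require Import lra zify.
Set Implicit Arguments. Unset Strict Implicit. Unset Printing Implicit Defensive.
Import Order.TTheory GRing.Theory Num.Theory.
Local Open Scope classical_set_scope.
Local Open Scope ring_scope.

(* Fix x, and m with P(X > x) = 2^-m and x < 2^(m+1).  Cutting the real line at
   the points c 2^(l+1), for some 1/2 <= c < 1 with x <= c 2^(m+1), turns each X_i
   into the St. Petersburg lottery truncated to M = m + k + 1 states, and the mean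
   of the X_i exceeds x as soon as the sum of the discretized values reaches
   2^k 2^(m+1).  For sums S_n of i.i.d. truncated lotteries,
   P(S_(2^k) >= 2^k 2^(i+1)) >= 2^-i follows by induction on k: with
   a = P(S >= t) >= 2^-i and a' = P(S >= 2t) >= 2^-(i+1), splitting S_(2^(k+1))
   into two independent halves gives P(S_(2^(k+1)) >= 2t) >= a^2 + 2a'(1 - a),
   which is at least 2^-i. *)

Definition ind_geq {R : pzSemiRingType} (t s : nat) : R := (t <= s)%N%:R.

Definition ffun_cons (A : Type) (n : nat) (a : A) (u : {ffun 'I_n -> A}) :
  {ffun 'I_n.+1 -> A} :=
  [ffun i => if unlift ord0 i is Some i' then u i' else a].

Lemma ffun_cons0 (A : Type) n (a : A) (u : {ffun 'I_n -> A}) :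
  ffun_cons a u ord0 = a.
Proof. by rewrite ffunE unlift_none. Qed.

Lemma ffun_consS (A : Type) n (a : A) (u : {ffun 'I_n -> A}) (i : 'I_n) :
  ffun_cons a u (lift ord0 i) = u i.
Proof. by rewrite ffunE liftK. Qed.

Lemma ffun_cons_bij (A : Type) n :
  bijective (fun p : A * {ffun 'I_n -> A} => ffun_cons p.1 p.2).
Proof.
exists (fun v : {ffun 'I_n.+1 -> A} => (v ord0, [ffun i => v (lift ord0 i)])).
  case=> a u /=; rewrite ffun_cons0; congr pair.
  by apply/ffunP => i; rewrite ffunE ffun_consS.
move=> v; apply/ffunP => i; rewrite ffunE.
by case: unliftP => [i' ->|->] //=; rewrite ffunE.
Qed.

Lemma ler_ind_geq {R : numDomainType} t u s s' :
  ((t <= s) -> (u <= s'))%N -> ind_geq t s <= ind_geq u s' :> R.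
Proof. by rewrite ler_nat; case: (t <= s)%N => // /(_ isT) ->. Qed.

Section iid_sum_expectation.
Variables (R : numDomainType) (M : nat) (W : nat -> R) (G : nat -> nat).

(* [Esum n f] is E[f (G L_1 + ... + G L_n)] for i.i.d. L_i with P(L_i = l) = W l
   for l < M; the recursion conditions on L_1. *)
Fixpoint Esum (n : nat) (f : nat -> R) : R :=
  if n is n'.+1 then \sum_(l < M) W l * Esum n' (fun s => f (G l + s)%N)
  else f 0%N.

Lemma eq_Esum n f1 f2 : f1 =1 f2 -> Esum n f1 = Esum n f2.
Proof.
elim: n f1 f2 => [|n IH] f1 f2 f12 /=; first exact: f12.
by apply: eq_bigr => l _; congr (_ * _); apply: IH => s.
Qed.

Lemma EsumD n f1 f2 :
  Esum n (fun s => f1 s + f2 s) = Esum n f1 + Esum n f2.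
Proof.
elim: n f1 f2 => [|n IH] f1 f2 //=; rewrite -big_split /=.
by apply: eq_bigr => l _; rewrite IH mulrDr.
Qed.

Lemma EsumZ n c f : Esum n (fun s => c * f s) = c * Esum n f.
Proof.
elim: n f => [|n IH] f //=; rewrite mulr_sumr.
by apply: eq_bigr => l _; rewrite IH mulrCA.
Qed.

Lemma Esum_addn a b f :
  Esum (a + b) f = Esum a (fun s => Esum b (fun s' => f (s + s')%N)).
Proof.
elim: a f => [|a IH] f /=; first exact: eq_Esum.
apply: eq_bigr => l _; rewrite IH; congr (_ * _).
by apply: eq_Esum => s; apply: eq_Esum => s'; rewrite addnA.
Qed.

Lemma Esum_ffun n f :
  Esum n f = \sum_(v : {ffun 'I_n -> 'I_M})
               (\prod_(i < n) W (v i)) * f (\sum_(i < n) G (v i))%N.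
Proof.
elim: n f => [|n IH] f /=.
  rewrite (big_pred1 (ffun0 (card_ord 0))) ?big_ord0 ?mul1r // => v.
  by apply/esym/eqP/ffunP => -[].
rewrite (reindex _ (onW_bij _ (@ffun_cons_bij 'I_M n))) /=.
rewrite -(pair_big xpredT xpredT (fun (j : 'I_M) (u : {ffun 'I_n -> 'I_M}) =>
  (\prod_(i < n.+1) W (ffun_cons j u i)) *
  f (\sum_(i < n.+1) G (ffun_cons j u i))%N)) /=.
apply: eq_bigr => j _; rewrite IH mulr_sumr; apply: eq_bigr => u _.
rewrite big_ord_recl [in RHS]big_ord_recl !ffun_cons0 mulrA.
by congr (_ * _ * f (_ + _)); apply: eq_bigr => i _; rewrite ffun_consS.
Qed.

Hypothesis W_ge0 : forall l, 0 <= W l.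
Hypothesis W_sum1 : \sum_(l < M) W l = 1.

Lemma Esum_cst n c : Esum n (fun=> c) = c.
Proof.
elim: n => [|n IH] //=.
by under eq_bigr do rewrite IH; rewrite -mulr_suml W_sum1 mul1r.
Qed.

Lemma ler_Esum n f1 f2 : (forall s, f1 s <= f2 s) -> Esum n f1 <= Esum n f2.
Proof.
elim: n f1 f2 => [|n IH] f1 f2 f12 //=.
by apply: ler_sum => l _; apply: ler_wpM2l => //; apply: IH.
Qed.

Lemma Esum_ind_geq_le1 n t : Esum n (ind_geq t) <= 1.
Proof.
by rewrite -(Esum_cst n 1); apply: ler_Esum => s; rewrite /ind_geq lern1 leq_b1.
Qed.

(* S_(2n) >= 2t as soon as one half is >= 2t, or both halves are >= t. *)
Lemma Esum_ind_geq_double n t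
    (a := Esum n (ind_geq t)) (a' := Esum n (ind_geq (2 * t))) :
  a' + (a - a') * a + (1 - a) * a' <= Esum (n + n) (ind_geq (2 * t)).
Proof.
have half s : a' + (a - a') * ind_geq t s + (1 - a) * ind_geq (2 * t) s <=
              Esum n (fun s' => ind_geq (2 * t) (s + s')).
  rewrite /ind_geq; case: (leqP (2 * t) s) => [h2|h2]; case: (leqP t s) => h1 /=.
  - have -> : Esum n (fun s' => ((2 * t <= s + s')%N)%:R) = 1.
      rewrite -[RHS](Esum_cst n 1); apply: eq_Esum => s'.
      by rewrite (leq_trans h2 (leq_addr _ _)).
    by rewrite !mulr1 [a' + _]addrC subrK addrC subrK.
  - lia.
  - rewrite mulr1 mulr0 addr0 addrC subrK; apply: ler_Esum => s'.
    by apply: ler_ind_geq; lia.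
  - by rewrite !mulr0 !addr0; apply: ler_Esum => s'; apply: ler_ind_geq; lia.
by have := ler_Esum n half; rewrite !EsumD !EsumZ Esum_cst -Esum_addn.
Qed.

End iid_sum_expectation.

Definition stpete_val (l : nat) : nat := 2 ^ l.+1.

(* Tail P(L >= l) of the state L of the St. Petersburg lottery truncated to the
   states l < M: the last state M.-1 carries the whole remaining mass. *)
Definition stpete_tail {R : fieldType} (M l : nat) : R :=
  if (l < M)%N then 2 ^- l else 0.

Definition stpete_wt {R : fieldType} (M l : nat) : R :=
  stpete_tail M l - stpete_tail M l.+1.

Section truncated_stpetersburg.
Variables (R : realFieldType) (M : nat).

Lemma exp2VS i : (2 : R) ^- i = 2 * 2 ^- i.+1.
Proof. by rewrite exprS invfM mulrA mulfV ?mul1r ?pnatr_eq0. Qed.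

Lemma stpete_wt_ge0 l : 0 <= stpete_wt M l :> R.
Proof.
rewrite subr_ge0 /stpete_tail; case: (ltnP l.+1 M) => hl.
  by rewrite (ltnW hl) (exp2VS l) ler_peMl ?invr_ge0 ?exprn_ge0 ?ler1n.
by case: ifP => // _; rewrite invr_ge0 exprn_ge0.
Qed.

Lemma sum_stpete_wt_geq i : (i <= M)%N ->
  \sum_(l < M | (i <= l)%N) stpete_wt M l = stpete_tail M i :> R.
Proof.
move=> hiM; transitivity (\sum_(i <= l < M) stpete_wt M l : R).
  by rewrite big_geq_mkord.
have tailM : stpete_tail M M = 0 :> R by rewrite /stpete_tail ltnn.
rewrite -[RHS]subr0 -[X in _ - X]tailM -opprB -telescope_sumr //.
by rewrite -sumrN; apply: eq_bigr => l _; rewrite opprB.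
Qed.

Lemma sum_stpete_wt : (0 < M)%N -> \sum_(l < M) stpete_wt M l = 1 :> R.
Proof.
move=> M0; rewrite (eq_bigl (fun l : 'I_M => 0 <= l)%N) // sum_stpete_wt_geq //.
by rewrite /stpete_tail M0 invr1.
Qed.

Lemma stpete_Esum1_tail i : (i < M)%N ->
  Esum M (stpete_wt M) stpete_val 1 (ind_geq (2 ^ i.+1)) = 2 ^- i :> R.
Proof.
move=> iM; have -> : (2 : R) ^- i = stpete_tail M i by rewrite /stpete_tail iM.
rewrite -sum_stpete_wt_geq 1?ltnW // big_mkcond; apply: eq_bigr => l _ /=.
by rewrite addn0 /ind_geq leq_exp2l // ltnS; case: (i <= l)%N; rewrite ?mulr1 ?mulr0.
Qed.

Lemma stpete_Esum_tail_ge k i : (i + k < M)%N ->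
  2 ^- i <=
  Esum M (stpete_wt M) stpete_val (2 ^ k) (ind_geq (2 ^ k * 2 ^ i.+1)) :> R.
Proof.
elim: k i => [|k IH] i hiM.
  by rewrite addn0 in hiM; rewrite expn0 mul1n stpete_Esum1_tail.
have hW1 := sum_stpete_wt (leq_ltn_trans (leq0n _) hiM).
have ha := IH i ltac:(lia).
have := IH i.+1 ltac:(lia); rewrite [(2 ^ i.+2)%N]expnS mulnCA => ha'.
set t := (2 ^ k * 2 ^ i.+1)%N in ha ha' *.
have a_le1 := Esum_ind_geq_le1 stpete_val stpete_wt_ge0 hW1 (2 ^ k) t.
have /= := Esum_ind_geq_double stpete_val stpete_wt_ge0 hW1 (2 ^ k) t.
have -> : (2 ^ k.+1 * 2 ^ i.+1 = 2 * t)%N by rewrite /t expnS mulnA.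
rewrite addnn -mul2n -expnS; apply: le_trans.
have p0 : 0 <= (2 : R) ^- i.+1 by rewrite invr_ge0 exprn_ge0.
rewrite exp2VS in ha *; nra.
Qed.

End truncated_stpetersburg.

Section dyadic_floor_log.
Variable R : realType.

Let ln2_gt0 : 0 < ln (2 : R).
Proof. by rewrite ln_gt0 // ltr1n. Qed.

Lemma ler_nat_log2 (l : nat) (y : R) : 0 < y ->
  (l%:R <= ln y / ln 2) = (2 ^+ l <= y).
Proof.
move=> y0; rewrite ler_pdivlMr // mulr_natl -lnXn //.
by rewrite ler_ln // posrE exprn_gt0.
Qed.

Lemma ltr_log2_nat (l : nat) (y : R) : 0 < y ->
  (ln y / ln 2 < l%:R) = (y < 2 ^+ l).
Proof.
move=> y0; rewrite ltr_pdivrMr // mulr_natl -lnXn //.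
by rewrite ltr_ln // posrE exprn_gt0.
Qed.

Lemma stpete_surv_dyadic (l : nat) (y : R) : 2 ^+ l <= y < 2 ^+ l.+1 ->
  stpete_surv y = 2 ^- l.
Proof.
case/andP => lo hi; rewrite /stpete_surv.
case: l lo hi => [|l] lo hi; first by rewrite hi invr1.
have y2 : 2 <= y by apply: le_trans lo; rewrite exprS ler_peMr ?exprn_ege1 ?ler1n.
have y0 : 0 < y by rewrite (lt_le_trans _ y2).
have -> : Num.floor (ln y / ln 2) = l.+1.
  apply: floor_def; rewrite -[_%:~R]/(l.+1)%:R ler_nat_log2 // lo /=.
  by rewrite -PoszD addn1 pmulrn ltr_log2_nat.
by rewrite ltNge y2 exprnN.
Qed.

Lemma stpete_surv_cover (x : R) :
  exists m : nat, stpete_surv x = 2 ^- m /\ x < 2 ^+ m.+1.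
Proof.
case: (ltP x 2) => x2.
  by exists 0%N; rewrite /stpete_surv x2 invr1.
have x0 : 0 < x by rewrite (lt_le_trans _ x2).
have /gez0_abs zE : 0 <= Num.floor (ln x / ln 2).
  by rewrite floor_ge0 divr_ge0 ?(ltW ln2_gt0) // ln_ge0 // (le_trans _ x2) ?ler1n.
exists `|Num.floor (ln x / ln 2)|%N; split.
  by rewrite /stpete_surv ltNge x2 /= -{1}zE exprnN.
have := floorD1_gt (ln x / ln 2).
by rewrite -{1}zE -PoszD addn1 pmulrn ltr_log2_nat.
Qed.

End dyadic_floor_log.

Lemma measurable_preimageT d d' (T : measurableType d) (U : measurableType d')
    (f : T -> U) (B : set U) :
  measurable_fun setT f -> measurable B -> measurable (f @^-1` B).
Proof. by move=> mf mB; rewrite -[_ @^-1` _]setTI; exact: mf. Qed.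

Definition stpete_up {R : realType} (M : nat) (c : R) (l : nat) : set R :=
  if (l < M)%N then `]c * 2 ^+ l.+1, +oo[%classic else set0.

Definition stpete_cell {R : realType} (M : nat) (c : R) (l : nat) : set R :=
  stpete_up M c l `\` stpete_up M c l.+1.

Section stpete_cells.
Variables (R : realType) (M : nat) (c : R).
Hypothesis c_ge0 : 0 <= c.

Lemma measurable_stpete_up l : measurable (stpete_up M c l).
Proof. by rewrite /stpete_up; case: ifP => _ //; exact: measurable_itv. Qed.

Lemma measurable_stpete_cell l : measurable (stpete_cell M c l).
Proof. exact: measurableD (measurable_stpete_up _) (measurable_stpete_up _). Qed.

Lemma stpete_up_subset l l' : (l <= l')%N -> stpete_up M c l' `<=` stpete_up M c l.
Proof.
rewrite /stpete_up => ll'; case: ifPn => [hl' y|_]; last exact: sub0set.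
rewrite (leq_ltn_trans ll' hl').
rewrite /= !in_itv /= !andbT; apply: le_lt_trans.
by rewrite ler_wpM2l // ler_eXn2l // ?ltr1n.
Qed.

Lemma stpete_cell_gt l y : stpete_cell M c l y -> c * 2 ^+ l.+1 < y.
Proof.
by rewrite /stpete_cell /stpete_up; case: ifP => _ [] //=; rewrite in_itv /= andbT.
Qed.

Lemma trivIset_stpete_cell : trivIset setT (stpete_cell M c).
Proof.
apply/trivIsetP => l l' _ _; wlog ll' : l l' / (l < l')%N => [wlogH nll'|_].
  case: (ltngtP l l') => [lt|gt|eq]; first exact: wlogH.
    by rewrite setIC; apply: wlogH; rewrite // eq_sym.
  by rewrite eq eqxx in nll'.
apply/seteqP; split => // y [[_ /= nup] [up _]].
by apply: nup; apply: stpete_up_subset ll' _ up.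
Qed.

End stpete_cells.

Section stpete_variable.
Variables (R : realType) (d : measure_display) (T : measurableType d).
Variables (P : probability T R) (Y : T -> R).
Hypothesis mY : measurable_fun setT Y.
Hypothesis hY : forall x, surv P Y x = (stpete_surv x)%:E.
Variables (M : nat) (c : R).
Hypothesis hc : 2^-1 <= c < 1.

Lemma P_stpete_up l : P (Y @^-1` stpete_up M c l) = (stpete_tail M l)%:E.
Proof.
rewrite /stpete_up /stpete_tail; case: ifP => _; last by rewrite preimage_set0 measure0.
rewrite preimage_itvoy -/(surv P Y _) hY (@stpete_surv_dyadic _ l) //.
case/andP: hc => c2 c1; rewrite gtr_pMl ?exprn_gt0 // c1 andbT.
by rewrite exprS mulrA ler_peMl ?exprn_ge0 // -ler_pdivrMr // div1r.
Qed.

Lemma P_stpete_cell l : P (Y @^-1` stpete_cell M c l) = (stpete_wt M l)%:E.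
Proof.
have c0 : 0 <= c by case/andP: hc => c2 _; rewrite (le_trans _ c2) ?invr_ge0.
have mup l' := measurable_preimageT mY (measurable_stpete_up M c l').
have -> : Y @^-1` stpete_cell M c l =
          Y @^-1` stpete_up M c l `\` Y @^-1` stpete_up M c l.+1 by [].
rewrite measureD //; last by rewrite (le_lt_trans (probability_le1 P (mup l))) ?ltry.
rewrite setIidr; last by apply: preimage_subset; apply: stpete_up_subset.
(* [measureD] shows [P] through its content structure, which is only
   convertible to the goal's [P]: fold [P_stpete_up] rather than unfold it. *)
by rewrite EFinB -!P_stpete_up.
Qed.

End stpete_variable.

Section iid_stpete_mean.
Variables (R : realType) (d : measure_display) (T : measurableType d).
Variables (P : probability T R) (n : nat) (Xs : 'I_n -> T -> R).
Hypothesis mXs : forall i, measurable_fun setT (Xs i).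
Hypothesis hXs : forall i x, surv P (Xs i) x = (stpete_surv x)%:E.
Hypothesis hind : mutually_independent P Xs.
Variables (M : nat) (c : R).
Hypothesis hc : 2^-1 <= c < 1.

Let c_ge0 : 0 <= c.
Proof. by case/andP: hc => c2 _; rewrite (le_trans _ c2) ?invr_ge0. Qed.

Let box (v : {ffun 'I_n -> 'I_M}) : set T :=
  \bigcap_(i in [set: 'I_n]) Xs i @^-1` stpete_cell M c (v i).

Let measurable_box v : measurable (box v).
Proof.
apply: fin_bigcap_measurable => [|i _]; first exact: finite_finset.
exact: measurable_preimageT (mXs i) (measurable_stpete_cell M c _).
Qed.

Let P_box v : P (box v) = (\prod_(i < n) stpete_wt M (v i))%:E.
Proof.
rewrite /box hind => [|i]; last exact: measurable_stpete_cell.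
by rewrite -prodEFin; apply: eq_bigr => i _; exact: P_stpete_cell.
Qed.

Let trivIset_box : trivIset setT box.
Proof.
apply/trivIsetP => v w _ _ vw; have [i viw] : exists i, v i != w i.
  apply/existsP; apply: contraNT vw => /existsPn eqvw.
  by apply/eqP/ffunP => i; apply/eqP/negbNE/eqvw.
have /trivIsetP cellsD := trivIset_stpete_cell (M := M) c_ge0.
apply/seteqP; split => // t [/(_ i I) tv /(_ i I) tw].
have : (stpete_cell M c (v i) `&` stpete_cell M c (w i)) (Xs i t) by split.
by rewrite (cellsD _ _ I I viw).
Qed.

Let P_bigcup_box (Q : pred {ffun 'I_n -> 'I_M}) :
  P (\bigcup_(v in [set v | Q v]) box v) =
  (\sum_(v | Q v) \prod_(i < n) stpete_wt M (v i))%:E.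
Proof.
have tQ : trivIset [set v | Q v] box := sub_trivIset (@subsetT _ _) trivIset_box.
rewrite (measure_fin_bigcup _ finite_finset tQ) => [|v _]; last exact: measurable_box.
rewrite (fsbigE (enum Q)) ?enum_uniq //; first last.
- by move=> v Qv; rewrite mem_enum => /negP.
- by move=> v; rewrite /= mem_enum.
rewrite big_enum_cond -sumEFin; apply: eq_big => [v|v _]; last exact: P_box.
by apply/andP/idP => [[]//|Qv]; split => //; exact: mem_set.
Qed.

Let box_sub_mean_gt (m : nat) (x : R) (v : {ffun 'I_n -> 'I_M}) :
  (0 < n)%N -> x <= c * 2 ^+ m.+1 ->
  (n * 2 ^ m.+1 <= \sum_(i < n) stpete_val (v i))%N ->
  box v `<=` [set t | x < n%:R^-1 * \sum_(i < n) Xs i t].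
Proof.
move=> n0 hx hv t tv /=; rewrite ltr_pdivlMl ?ltr0n //.
apply: (@le_lt_trans _ _ (\sum_(i < n) c * 2 ^+ (v i).+1)).
  rewrite -mulr_sumr mulrC (le_trans (ler_wpM2r (ler0n _ _) hx)) //.
  rewrite -mulrA ler_wpM2l // mulrC -natrX -natrM.
  rewrite (eq_bigr (fun i => (stpete_val (v i))%:R)) => [|i _]; last by rewrite natrX.
  by rewrite -natr_sum ler_nat.
apply: ltr_sum => [|i _]; last exact: stpete_cell_gt (tv i I).
by apply/hasP; exists (Ordinal n0); rewrite ?mem_index_enum.
Qed.

Lemma stpete_mean_tail_ge (m : nat) (x : R) : (0 < n)%N -> x <= c * 2 ^+ m.+1 ->
  ((Esum M (stpete_wt M) stpete_val n (ind_geq (n * 2 ^ m.+1)))%:E <=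
   P [set t | (x < n%:R^-1 * \sum_(i < n) Xs i t)%R])%E.
Proof.
move=> n0 hx; pose good := [pred v : {ffun 'I_n -> 'I_M} |
  (n * 2 ^ m.+1 <= \sum_(i < n) stpete_val (v i))%N].
have measurable_mean : measurable [set t | x < n%:R^-1 * \sum_(i < n) Xs i t].
  rewrite -preimage_itvoy; apply: measurable_preimageT; last exact: measurable_itv.
  apply: measurable_realfun.measurable_funM; first exact: measurable_cst.
  exact: measurable_sum.
rewrite Esum_ffun (_ : \sum_v _ = \sum_(v | good v) \prod_(i < n) stpete_wt M (v i)).
  rewrite -P_bigcup_box; apply: le_measure; rewrite ?inE //.
  - apply: fin_bigcup_measurable => [|v _]; first exact: finite_finset.
    exact: measurable_box.
  - by move=> t [v gv]; exact: box_sub_mean_gt n0 hx gv t.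
rewrite [RHS]big_mkcond; apply: eq_bigr => v _.
by rewrite /ind_geq /=; case: (_ <= _)%N; rewrite ?mulr1 ?mulr0.
Qed.

End iid_stpete_mean.

Theorem proposition3 (R : realType) (d : measure_display) (T : measurableType d)
  (P : probability T R) (k : nat) (hk : (0 < k)%N)
  (X : T -> R) (Xs : 'I_(2 ^ k) -> T -> R)
  (mX : measurable_fun setT X) (mXs : forall i, measurable_fun setT (Xs i))
  (hX : forall x : R, surv P X x = (stpete_surv x)%:E)
  (hXs : forall (i : 'I_(2 ^ k)) (x : R), surv P (Xs i) x = (stpete_surv x)%:E)
  (hind : mutually_independent P Xs) :
  let Xbar : T -> R := fun t => ((2 ^ k)%:R^-1 * \sum_(i < 2 ^ k) Xs i t)%R in
  forall x : R, (surv P X x <= surv P Xbar x)%E.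
Proof.
move=> Xbar x; have [m [surv_x x_lt]] := stpete_surv_cover x.
pose c := Num.max 2^-1 (x / 2 ^+ m.+1).
have hc : 2^-1 <= c < 1.
  rewrite le_max lexx gt_max invf_lt1 ?ltr1n //.
  by rewrite ltr_pdivrMr ?exprn_gt0 // mul1r x_lt.
have x_le : x <= c * 2 ^+ m.+1 by rewrite -ler_pdivrMr ?exprn_gt0 // le_max lexx orbT.
have n0 : (0 < 2 ^ k)%N by rewrite expn_gt0.
rewrite hX surv_x.
apply: le_trans (stpete_mean_tail_ge mXs hXs hind (m + k).+1 hc n0 x_le).
by rewrite lee_fin; apply: stpete_Esum_tail_ge.
Qed.
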